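(* Let $\delta\ge1$ be an integer and $h\ge0$. Under the AMC-$h$ policy, for every characteristic function $v\in V_\delta$ and every arrival order $\pi$, the coalition structure $C_g$ formed by greedy players satisfies $|S|\le\left\lceil\frac{\delta\cdot\mathsf{min}}{\mathsf{min}+h}\right\rceil$ for every $S\in C_g$.
   Context: Players: a finite set $N=\{a_1,\dots,a_n\}$. A characteristic function is $v:2^N\to\mathbb{R}_{\ge 0}$ with $v(\emptyset)=0$. There are fixed constants $0<\mathsf{min}\le\mathsf{max}$ and $v$ is monotone and bounded: $\mathsf{min}\le v(S)\le v(T)\le\mathsf{max}$ for all nonempty $S\subseteq T\subseteq N$. $V_\delta$ is the set of such $v$ with $\delta\cdot\mathsf{min}\le\mathsf{max}<(\delta+1)\cdot\mathsf{min}$. Online process: an arrival order is a permutation $\pi=(\pi_1,\dots,\pi_n)$ of $N$; player $\pi_t$ arrives at time $t$; $\pi_{\prec t}$ is the set of players arriving before time $t$ and $\pi^{-1}(i)$ the arrival time of $i$. For $S\subseteq N$, $\pi_{|S}$ denotes the players of $S$ in the relative order of $\pi$. Let $C^{t-1}$ be the coalition structure of players arrived before time $t$ ($C^0=\emptyset$). At time $t$, player $\pi_t$ either joins an existing coalition $S\in C^{t-1}$ or forms $\{\pi_t\}$ (choice $S=\emptyset$); decisions are never revised. AMC-$h$ policy: when player $i$ joins coalition $S$, let $\mathsf{MC}_i=v((\pi_{\prec\pi^{-1}(i)}\cap S)\cup\{i\})-v(\pi_{\prec\pi^{-1}(i)}\cap S)$. If $\mathsf{MC}_i\le h$, all of $\mathsf{MC}_i$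 is added to the share of the last player of $S$ who arrived before $i$; if $\mathsf{MC}_i>h$, that previous player additionally receives $h$ and $i$ receives $\mathsf{MC}_i-h$; if $i$ is the first player of her coalition, the ''previous player'' is $i$ herself. Shares already assigned are never reduced; $\varphi_i(S,\pi_{|S})$ is $i$'s accumulated share when the coalition is $S$. Greedy players: $\pi_t$ chooses $S\in C^{t-1}\cup\{\emptyset\}$ maximizing $\varphi_{\pi_t}(S\cup\{\pi_t\},\pi_{|S\cup\{\pi_t\}})$ (predetermined tie-breaking); $C_g$ is the final structure after all $n$ arrivals. *)

From mathcomp Require Import all_boot all_order all_algebra.
Set Implicit Arguments. Unset Strict Implicit. Unset Printing Implicit Defensive.
Import Order.TTheory GRing.Theory Num.Theory.
Local Open Scope ring_scope.

Section AMC.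
Variables (R : realFieldType) (T : finType).

Definition char_fun (mn mx : R) (v : {set T} -> R) : Prop :=
  v set0 = 0 /\
  forall S S' : {set T}, S != set0 -> S \subset S' ->
    mn <= v S /\ v S <= v S' /\ v S' <= mx.

Definition in_V (delta : nat) (mn mx : R) (v : {set T} -> R) : Prop :=
  char_fun mn mx v /\ delta%:R * mn <= mx /\ mx < (delta.+1)%:R * mn.

(* A coalition is represented as the sequence of its members in arrival order
   (i.e. pi restricted to S).  [amc_gain v h p x i] is what player i receives
   under AMC-h when player x joins the coalition whose members so far are p.
   The "previous player" is last x p (= x itself when p is empty). *)
Definition amc_gain (v : {set T} -> R) (h : R) (p : seq T) (x i : T) : R :=
  let mc := v [set y in rcons p x] - v [set y in p] in
  (if i == last x p then Num.min mc h else 0)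
  + (if (i == x) && (h < mc) then mc - h else 0).

Definition amc_share (v : {set T} -> R) (h : R) (s : seq T) (i : T) : R :=
  \sum_(j < size s) amc_gain v h (take j s) (nth i s j) i.

(* Share of the arriving player x if she joins coalition c ([::] = new coalition). *)
Definition join_util v h (c : seq T) (x : T) : R := amc_share v h (rcons c x) x.

(* One greedy arrival: x picks a share-maximizing option among the existing
   coalitions and the empty choice; any maximizer may be picked (covers every
   predetermined tie-breaking rule). *)
Inductive greedy_step v h (CS : seq (seq T)) (x : T) : seq (seq T) -> Prop :=
| gs_new :
    (forall c, c \in CS -> join_util v h c x <= join_util v h [::] x) ->
    greedy_step v h CS x (rcons CS [:: x])
| gs_join (k : nat) :
    (k < size CS)%N ->
    join_util v h [::] x <= join_util v h (nth [::] CS k) x ->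
    (forall c, c \in CS -> join_util v h c x <= join_util v h (nth [::] CS k) x) ->
    greedy_step v h CS x (set_nth [::] CS k (rcons (nth [::] CS k) x)).

Inductive greedy_run v h : seq T -> seq (seq T) -> Prop :=
| gr_nil : greedy_run v h [::] [::]
| gr_snoc p x CS CS' :
    greedy_run v h p CS -> greedy_step v h CS x CS' ->
    greedy_run v h (rcons p x) CS'.

End AMC.

(** A player who joins an existing coalition keeps only the part of her
    marginal contribution above [h], whereas founding her own coalition gives
    her the whole value of her singleton, at least [min].  A greedy player
    therefore joins only when her marginal contribution is at least
    [min + h], so a coalition with [k] members is worth at least
    [min + (k - 1)(min + h)].  Since that value is at most
    [max < (delta + 1) min], we get [k - 1 < delta min / (min + h)]. *)

From mathcomp Require Import all_boot all_order all_algebra zify lra.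
Set Implicit Arguments. Unset Strict Implicit. Unset Printing Implicit Defensive.
Import Order.TTheory GRing.Theory Num.Theory.
Local Open Scope ring_scope.

Lemma mem_set_nth_lt (T : eqType) (x0 x y : T) (s : seq T) (n : nat) :
  (n < size s)%N -> x \in set_nth x0 s n y -> x = y \/ x \in s.
Proof.
move=> lt_n; rewrite set_nthE lt_n mem_cat inE => /orP[/mem_take|/orP[/eqP|/mem_drop]];
  by [right | left].
Qed.

Lemma seq_set_neq0 (T : finType) (c : seq T) : c != [::] -> [set y in c] != set0.
Proof. by case: c => [//|a s] _; apply/set0Pn; exists a; rewrite inE mem_head. Qed.

Section AMCGains.
Variables (R : realFieldType) (T : finType) (v : {set T} -> R) (h : R).

Definition marginal (p : seq T) (x : T) : R :=
  v [set y in rcons p x] - v [set y in p].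

Lemma amc_gain_nonmember p y i : i \notin y :: p -> amc_gain v h p y i = 0.
Proof.
move=> i_notin; have ne_ilast : (i == last y p) = false.
  by apply/negbTE; apply: contra i_notin => /eqP ->; apply: mem_last.
move: i_notin; rewrite inE negb_or => /andP[/negbTE ne_iy _].
by rewrite /amc_gain ne_ilast ne_iy addr0.
Qed.

Lemma join_util_notin c x : x \notin c -> join_util v h c x = amc_gain v h c x x.
Proof.
move=> x_notin_c; rewrite /join_util /amc_share size_rcons big_ord_recr /=.
rewrite -cats1 take_size_cat // nth_cat ltnn subnn big1 ?add0r // => -[j lt_j] _ /=.
rewrite take_cat lt_j nth_cat lt_j; apply: amc_gain_nonmember.
rewrite inE negb_or; apply/andP; split.
  by apply: contra x_notin_c => /eqP ->; apply: mem_nth.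
by apply: contra x_notin_c; apply: mem_take.
Qed.

Lemma join_util_nil x : join_util v h [::] x = marginal [::] x.
Proof.
rewrite join_util_notin // /amc_gain /= eqxx -/(marginal [::] x).
by case: ltP => _; rewrite ?addr0 // addrC subrK.
Qed.

Lemma join_util_cons c x : c != [::] -> x \notin c ->
  join_util v h c x = if h < marginal c x then marginal c x - h else 0.
Proof.
move=> c_nonempty x_notin_c; rewrite join_util_notin // /amc_gain eqxx /=.
have -> : (x == last x c) = false.
  case: c c_nonempty x_notin_c => [//|a s] _ /=.
  by apply/contraNF => /eqP {1}->; apply: mem_last.
by rewrite add0r.
Qed.

End AMCGains.

Section GreedyInvariant.
Variables (R : realFieldType) (T : finType) (v : {set T} -> R) (h mn mx : R).
Hypothesis mn_gt0 : 0 < mn.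
Hypothesis v_char : char_fun mn mx v.

Lemma char_fun_bounds (S : {set T}) : S != set0 -> mn <= v S <= mx.
Proof.
case: v_char => _ bounds S_neq0.
by have [-> [_ ->]] := bounds S S S_neq0 (subxx S).
Qed.

Lemma marginal_nil x : mn <= marginal v [::] x.
Proof.
have [v0 _] := v_char; rewrite /marginal.
have -> : [set y in ([::] : seq T)] = set0 by apply/setP => y; rewrite !inE.
rewrite v0 subr0.
by have /andP[] := char_fun_bounds (@seq_set_neq0 _ [:: x] isT).
Qed.

Lemma greedy_join_marginal c x : c != [::] -> x \notin c ->
  join_util v h [::] x <= join_util v h c x -> mn + h <= marginal v c x.
Proof.
move=> c_nonempty x_notin_c; rewrite join_util_nil join_util_cons //.
have := marginal_nil x; have := mn_gt0; case: ifP => _; lra.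
Qed.

Definition greedy_invariant (p : seq T) (CS : seq (seq T)) : Prop :=
  forall c, c \in CS -> [/\ c != [::], {subset c <= p} &
    mn + (size c).-1%:R * (mn + h) <= v [set y in c]].

Lemma greedy_invariant_rcons p CS x :
  greedy_invariant p CS -> greedy_invariant (rcons p x) CS.
Proof.
move=> inv c /inv[c_nonempty c_sub c_val]; split=> // y /c_sub y_in.
by rewrite mem_rcons inE y_in orbT.
Qed.

Lemma greedy_step_invariant p CS x CS' : x \notin p ->
  greedy_invariant p CS -> greedy_step v h CS x CS' ->
  greedy_invariant (rcons p x) CS'.
Proof.
move=> x_notin_p inv; have inv' := greedy_invariant_rcons x inv.
case=> [_ | k lt_k join_ge _] c.
  rewrite mem_rcons inE => /orP[/eqP -> | /inv'//]; split=> //.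
    by move=> y; rewrite inE => /eqP ->; rewrite mem_rcons mem_head.
  by rewrite /= mul0r addr0; have /andP[] := char_fun_bounds (@seq_set_neq0 _ [:: x] isT).
move=> /(mem_set_nth_lt lt_k)[-> | /inv'//].
set ck := nth [::] CS k; have /inv[ck_nonempty ck_sub ck_val] : ck \in CS by apply: mem_nth.
have x_notin_ck : x \notin ck by apply: contra x_notin_p => /ck_sub.
have mc_ge := greedy_join_marginal ck_nonempty x_notin_ck join_ge.
split.
- by rewrite -size_eq0 size_rcons.
- by move=> y; rewrite !mem_rcons !inE => /orP[-> // | /ck_sub ->]; rewrite orbT.
- have size_ck_gt0 : (0 < size ck)%N by rewrite lt0n size_eq0.
  move: mc_ge; rewrite /marginal size_rcons /= -(prednK size_ck_gt0) -addn1 natrD; lra.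
Qed.

Lemma greedy_run_invariant p CS : uniq p -> greedy_run v h p CS -> greedy_invariant p CS.
Proof.
move=> p_uniq run; elim: run p_uniq => [_ c // | q x CS0 CS1 _ IH step].
by rewrite rcons_uniq => /andP[x_notin_q /IH inv]; apply: greedy_step_invariant step.
Qed.

End GreedyInvariant.

Lemma succ_le_ceil (R : archiRealFieldType) (mn h : R) (delta n : nat) :
  0 < mn -> 0 <= h -> mn + n%:R * (mn + h) < delta.+1%:R * mn ->
  (n.+1%:Z <= Num.ceil (delta%:R * mn / (mn + h)))%R.
Proof.
move=> mn_gt0 h_ge0 bound.
suff : (n%:Z < Num.ceil (delta%:R * mn / (mn + h)))%R by lia.
rewrite ceil_gt_int ltr_pdivlMr; last by lra.
by move: bound; rewrite -addn1 natrD; lra.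
Qed.

Theorem lemma3 (R : archiRealFieldType) (T : finType) (mn mx h : R)
  (delta : nat) (v : {set T} -> R) (pi : seq T) (Cg : seq (seq T)) :
  0 < mn -> mn <= mx -> (1 <= delta)%N -> 0 <= h ->
  in_V delta mn mx v ->
  perm_eq pi (enum T) ->
  greedy_run v h pi Cg ->
  forall S, S \in Cg ->
    (#|[set y in S]|%:Z <= Num.ceil (delta%:R * mn / (mn + h)))%R.
Proof.
move=> mn_gt0 _ _ h_ge0 [v_char [_ mx_lt]] pi_perm run S S_in.
have pi_uniq : uniq pi by rewrite (perm_uniq pi_perm) enum_uniq.
have [S_nonempty _ S_val] := greedy_run_invariant mn_gt0 v_char pi_uniq run S_in.
have /andP[_ S_le] := char_fun_bounds v_char (seq_set_neq0 S_nonempty).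
have size_S_gt0 : (0 < size S)%N by rewrite lt0n size_eq0.
have := succ_le_ceil mn_gt0 h_ge0 (le_lt_trans (le_trans S_val S_le) mx_lt).
rewrite prednK //; apply: le_trans.
by rewrite cardsE lez_nat card_size.
Qed.
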